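(* The probability that $\mathcal{X}$ is not $\delta$-sparse is at most \[ n^{16d\sqrt{k}+12}\cdot\left(\frac{n^4\delta}{\sigma}\right)^d. \]
   Context: Setting: positive integers $n,k,d$ with $k\le n$, $d\le n$; $\sigma>0$; adversarial $\mu_1,\ldots,\mu_n\in[0,1]^d$; $\mathcal{X}=\{x_1,\ldots,x_n\}$ with $x_i=\mu_i+g_i$, where the $g_i$ are independent $d$-dimensional Gaussian vectors with mean $0$ and independent coordinates of standard deviation $\sigma$. ($\sqrt{k}$ is treated as an integer.) A key-value is an expression $K=\frac{s}{t}\cdot\mathrm{cm}(S)$ with $s,t\in\mathbb{N}$, $s\le n^2$, $t<n$, and $S\subseteq\mathcal{X}$ a set of at most $4d\sqrt{k}$ points, where $\mathrm{cm}(S)$ is the center of mass of $S$; it is thus a formal linear combination of the data points. For key-values (or sums of key-values) $K,K'$, write $K\equiv K'$ iff they have identical coefficients for every data point. $\mathcal{X}$ is $\delta$-sparse if for all key-values $K_1,K_2,K_3,K_4$ with $\|K_1+K_2-K_3-K_4\|\le\delta$ we have $K_1+K_2\equiv K_3+K_4$. *)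

From HB Require Import structures.
From mathcomp Require Import all_boot all_order all_algebra.
From mathcomp Require Import all_classical all_reals all_analysis.
Set Implicit Arguments. Unset Strict Implicit. Unset Printing Implicit Defensive.
Import Order.TTheory GRing.Theory Num.Theory.
Local Open Scope classical_set_scope.
Local Open Scope ring_scope.

(* Mutual independence of a finite family of real random variables:
   each is measurable, and the product rule holds for every family of
   Borel sets (taking B i = setT recovers every subfamily). *)
Definition mutually_independent {dT : measure_display} {T : measurableType dT}
  {R : realType} (P : probability T R) {I : finType} (X : I -> T -> R) : Prop :=
  (forall i, measurable_fun setT (X i)) /\
  forall B : I -> set R, (forall i, measurable (B i)) ->
    P (\bigcap_(i in [set: I]) (X i @^-1` B i)) =
    (\prod_(i : I) P (X i @^-1` B i))%E.

Definition data_points {R : realType} {T : Type} (n d : nat)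
  (mu : 'I_n -> 'I_d -> R) (g : 'I_n * 'I_d -> T -> R) (w : T) : 'I_n -> 'I_d -> R :=
  fun i j => mu i j + g (i, j) w.

(* Coefficient vector (w.r.t. the data points) of the key-value (s/t) cm(S),
   S a set of data points given by their indices. *)
Definition kv_coef {R : realType} (n : nat) (s t : nat) (S : {set 'I_n}) : 'I_n -> R :=
  fun i => if i \in S then s%:R / (t%:R * #|S|%:R) else 0.

(* c is (the formal linear combination of) a key-value; sqrtk stands for sqrt k. *)
Definition is_keyvalue {R : realType} (n d sqrtk : nat) (c : 'I_n -> R) : Prop :=
  exists (s t : nat) (S : {set 'I_n}),
    [/\ (s <= n ^ 2)%N, (0 < t < n)%N, (0 < #|S| <= 4 * d * sqrtk)%N
      & c = kv_coef s t S].

Definition lincomb {R : realType} (n d : nat) (c : 'I_n -> R)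
  (x : 'I_n -> 'I_d -> R) : 'I_d -> R :=
  fun j => \sum_(i < n) c i * x i j.

Definition eucl_norm {R : realType} (d : nat) (v : 'I_d -> R) : R :=
  Num.sqrt (\sum_(j < d) v j ^+ 2).

Definition delta_sparse {R : realType} (n d sqrtk : nat) (delta : R)
  (x : 'I_n -> 'I_d -> R) : Prop :=
  forall c1 c2 c3 c4 : 'I_n -> R,
    is_keyvalue d sqrtk c1 -> is_keyvalue d sqrtk c2 ->
    is_keyvalue d sqrtk c3 -> is_keyvalue d sqrtk c4 ->
    eucl_norm (lincomb (fun i => c1 i + c2 i - c3 i - c4 i) x) <= delta ->
    (fun i => c1 i + c2 i) = (fun i => c3 i + c4 i).

From HB Require Import structures.
From mathcomp Require Import all_boot all_order all_algebra.
From mathcomp Require Import all_classical all_reals all_analysis.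
From mathcomp Require Import ring lra zify.
Set Implicit Arguments. Unset Strict Implicit. Unset Printing Implicit Defensive.
Import Order.TTheory GRing.Theory Num.Theory.

(* If four key-values violate sparsity, the coefficient vector c of K1 + K2 - K3 - K4
   has an entry c_i0 <> 0, and clearing denominators gives |c_i0| >= 1 / prod_k t_k |S_k|.
   The event || sum_i c_i x_i || <= delta forces every coordinate of c_i0 g_i0 to lie in a
   window of length 2 delta / |c_i0| determined by the other noise variables; conditioning
   on these (discretised on a grid of mesh eta, which then tends to 0), each of the d
   independent Gaussian coordinates of g_i0 lands there with probability at most
   delta / (|c_i0| sigma). A union bound over quadruples, weighted by (t |S|)^d, and the
   count sum_(s,t,S) (t |S|)^d <= n^(4 d sqrt k + 3 + d) give the claim. *)

(** * Counting key-values *)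

Lemma ffact_leq_expn n j : n ^_ j <= n ^ j.
Proof.
elim: j => [|j IHj]; first by rewrite ffactn0 expn0.
by rewrite ffactnSr expnS mulnC leq_mul ?leq_subr.
Qed.

Lemma expn_leq_fact_ffact j e : e <= j -> j ^ e <= e`! * j ^_ e.
Proof.
elim: e => [|e IHe] lt_e_j; first by rewrite expn0 fact0 ffactn0.
have {}IHe := IHe (ltnW lt_e_j).
have le_j : j <= e.+1 * (j - e) by nia.
rewrite expnS factS ffactnSr mulnC.
apply: (leq_trans (leq_mul IHe le_j)); nia.
Qed.

Lemma expn_leq_fact j e : 2 * e <= j -> j ^ e <= j`!.
Proof.
move=> le_2e_j; have le_e_j : e <= j by lia.
rewrite -(ffact_fact le_e_j) (leq_trans (expn_leq_fact_ffact le_e_j)) //.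
by rewrite mulnC leq_mul2l leq_fact ?orbT //; lia.
Qed.

Lemma sum_set_card (T : finType) (F : nat -> nat) :
  \sum_(S : {set T}) F #|S| = \sum_(j < #|T|.+1) 'C(#|T|, j) * F j.
Proof.
transitivity (\sum_(S : {set T}) \sum_(j < #|T|.+1 | #|S| == j) F j).
  apply: eq_bigr => S _; have lt_S : #|S| < #|T|.+1 by rewrite ltnS max_card.
  by rewrite (big_pred1 (Ordinal lt_S)) // => j; rewrite eq_sym.
rewrite (exchange_big_dep xpredT) //=; apply: eq_bigr => j _.
by rewrite sum_nat_const -card_draws cardsE.
Qed.

Lemma binomial_weight_leq n d m j : 0 < d -> 4 * d <= m -> 0 < j <= minn n m ->
  minn n m * ('C(n, j) * j ^ d) <= n ^ m.
Proof.
move=> d_gt0 le_4d_m /andP[j_gt0]; rewrite leq_min => /andP[le_jn le_jm].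
have n_gt0 : 0 < n by lia.
have le_min_n : minn n m <= n := geq_minl n m.
have bin_fact : 'C(n, j) * j`! <= n ^ j by rewrite bin_ffact ffact_leq_expn.
have [lt_jd_m | le_m_jd] := ltnP (j + d) m.
  apply: (@leq_trans (n * (n ^ j * n ^ d))).
    rewrite leq_mul // leq_mul ?leq_exp2r //.
    by apply: leq_trans bin_fact; rewrite leq_pmulr ?fact_gt0.
  by rewrite -!expnD -expnS leq_pexp2l.
have min_fact : minn n m * j ^ d <= j`! * n ^ (m - j).
  have [lt_jm | le_mj] := ltnP j m.
    rewrite mulnC; apply: leq_mul; first by apply: expn_leq_fact; lia.
    by apply: leq_trans le_min_n _; rewrite -{1}(expn1 n) leq_pexp2l // subn_gt0.
  have -> : j = m by lia.
  rewrite subnn expn0 muln1 (leq_trans _ (@expn_leq_fact m d.+1 _)) //; last by lia.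
  by rewrite expnS leq_mul ?geq_minr.
rewrite mulnCA (leq_trans (leq_mul (leqnn _) min_fact)) // mulnA.
by rewrite (leq_trans (leq_mul bin_fact (leqnn _))) // -expnD subnKC.
Qed.

Lemma sum_card_expn_leq n d m : 0 < d -> 4 * d <= m ->
  \sum_(S : {set 'I_n} | 0 < #|S| <= m) #|S| ^ d <= n ^ m.
Proof.
move=> d_gt0 le_4d_m; have [->|n_gt0] := posnP n.
  by rewrite big1 // => S /andP[S_gt0 _]; move: (max_card S); rewrite card_ord; lia.
set m' := minn n m.
have m'_gt0 : 0 < m' by rewrite leq_min n_gt0; lia.
(* Each of the at most m' nonzero terms is bounded by n ^ m / m'. *)
rewrite -(leq_pmul2l m'_gt0) big_mkcond /=.
rewrite (sum_set_card _ (fun j => if 0 < j <= m then j ^ d else 0)).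
rewrite card_ord big_distrr /=.
apply: (@leq_trans (\sum_(j < n.+1 | 0 < j <= m') n ^ m)).
  rewrite [X in _ <= X]big_mkcond /=; apply: leq_sum => j _.
  case: ifPn => [/andP[j_gt0 le_jm] | _]; last by rewrite !muln0.
  have [le_jn | lt_nj] := leqP j n; last by rewrite bin_small // mul0n muln0.
  have le_jm' : j <= m' by rewrite leq_min le_jn.
  by rewrite j_gt0 le_jm' /= binomial_weight_leq // j_gt0.
rewrite -(big_mkord (fun j => 0 < j <= m') (fun _ => n ^ m)).
rewrite (eq_bigl (fun j => (0 < j) && (j < m'.+1))) //.
rewrite -big_nat_widen ?ltnS ?geq_minl // big_mkcond big_nat_recl //=.
by rewrite add0n sum_nat_const_nat subn0.
Qed.

(* (s, t, S) codes the key-value (s / t) cm(S); invalid codes get weight 0. *)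
Definition kv_code n := ('I_(n ^ 2).+1 * 'I_n * {set 'I_n})%type.

Definition kv_code_valid n m (x : kv_code n) := (0 < x.1.2) && (0 < #|x.2| <= m).

Definition kv_weight n d m (x : kv_code n) :=
  if kv_code_valid m x then (x.1.2 * #|x.2|) ^ d else 0.

Lemma sum_kv_weight_leq n d m : 0 < d -> 4 * d <= m ->
  \sum_(x : kv_code n) kv_weight d m x <= n ^ (m + 3 + d).
Proof.
move=> d_gt0 le_4d_m.
pose wt (t : 'I_n) := (0 < t) * t ^ d.
pose wS (S : {set 'I_n}) := (0 < #|S| <= m) * #|S| ^ d.
have -> : \sum_(x : kv_code n) kv_weight d m x =
    (n ^ 2).+1 * (\sum_(t : 'I_n) wt t) * \sum_(S : {set 'I_n}) wS S.
  transitivity (\sum_(s : 'I_(n ^ 2).+1) \sum_(t : 'I_n) \sum_(S : {set 'I_n})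
                  kv_weight d m (s, t, S)).
    by rewrite !pair_bigA; apply: eq_bigr => -[[]].
  rewrite -mulnA -[X in X * _]card_ord -sum_nat_const; apply: eq_bigr => s _.
  rewrite big_distrl; apply: eq_bigr => t _; rewrite big_distrr; apply: eq_bigr => S _.
  rewrite /kv_weight /kv_code_valid /wt /wS /= expnMn.
  by case: (0 < t); case: (0 < #|S| <= m); rewrite ?mul0n ?muln0 ?mul1n.
have sum_wt : \sum_(t : 'I_n) wt t <= n.-1 * n ^ d.
  rewrite /wt; case: n {wt wS} => [|n]; first by rewrite big_ord0.
  rewrite big_ord_recl add0n /= -[X in _ <= X * _]card_ord -sum_nat_const.
  by apply: leq_sum => t _; rewrite mul1n leq_exp2r // ltnS ltnW.
have sum_wS : \sum_(S : {set 'I_n}) wS S <= n ^ m.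
  rewrite (leq_trans _ (sum_card_expn_leq n d_gt0 le_4d_m)) // [X in _ <= X]big_mkcond.
  by apply: leq_sum => S _; rewrite /wS; case: ifP; rewrite ?mul1n.
apply: (@leq_trans ((n ^ 2).+1 * (n.-1 * n ^ d) * n ^ m)); first by rewrite !leq_mul.
have le_n3 : (n ^ 2).+1 * n.-1 <= n ^ 3 by case: n {wt wS sum_wt sum_wS} => // n; nia.
have -> : n ^ (m + 3 + d) = n ^ 3 * n ^ d * n ^ m by rewrite -!expnD; congr (_ ^ _); lia.
by rewrite mulnA; apply: leq_mul => //; apply: leq_mul.
Qed.

Local Open Scope classical_set_scope.
Local Open Scope ring_scope.

(** * Gaussian anti-concentration *)

Lemma natr_dist_ge1 (R : realDomainType) (u v : nat) : u != v -> 1 <= `|u%:R - v%:R : R|.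
Proof.
move=> neq_uv; have [le_vu | lt_uv] := leqP v u.
  rewrite -natrB // normr_nat (ler_nat R 1) subn_gt0 ltn_neqAle le_vu andbT.
  by apply: contraNneq neq_uv => ->.
rewrite distrC -(natrB _ (ltnW lt_uv)) normr_nat (ler_nat R 1) subn_gt0; exact: lt_uv.
Qed.

Lemma frac4_norm_ge (R : realFieldType) (a1 a2 a3 a4 D1 D2 D3 D4 : nat) (c : R) :
  (0 < D1)%N -> (0 < D2)%N -> (0 < D3)%N -> (0 < D4)%N ->
  c = a1%:R / D1%:R + a2%:R / D2%:R - a3%:R / D3%:R - a4%:R / D4%:R ->
  c != 0 -> ((D1 * D2 * D3 * D4)%N%:R)^-1 <= `|c|.
Proof.
move=> D1_gt0 D2_gt0 D3_gt0 D4_gt0 c_def c_neq0.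
set D := (D1 * D2 * D3 * D4)%N.
have D_gt0 : (0 : R) < D%:R by rewrite ltr0n !muln_gt0 D1_gt0 D2_gt0 D3_gt0.
set u := (a1 * D2 * D3 * D4 + a2 * D1 * D3 * D4)%N.
set v := (a3 * D1 * D2 * D4 + a4 * D1 * D2 * D3)%N.
have cE : c = (u%:R - v%:R) / D%:R.
  rewrite c_def /u /v /D !natrD !natrM; field.
  by rewrite !pnatr_eq0 -!lt0n D1_gt0 D2_gt0 D3_gt0 D4_gt0.
have neq_uv : u != v by apply: contraNneq c_neq0 => eq_uv; rewrite cE eq_uv subrr mul0r.
rewrite cE normrM normfV (gtr0_norm D_gt0) -[X in X <= _]mul1r ler_pM2r ?invr_gt0 //.
exact: natr_dist_ge1.
Qed.

Section normal_prob_bound.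
Variables (R : realType) (sigma : R).
Hypothesis sigma_gt0 : 0 < sigma.

Lemma normal_peak_le : normal_peak sigma <= (2 * sigma)^-1.
Proof.
have sigma2_ge0 : 0 <= sigma ^+ 2 by rewrite exprn_ge0 // ltW.
rewrite /normal_peak lef_pV2 ?posrE; last 2 first.
- by rewrite sqrtr_gt0 mulrn_wgt0 // mulr_gt0 ?pi_gt0 // exprn_gt0.
- by rewrite mulr_gt0.
have -> : 2 * sigma = Num.sqrt ((2 * sigma) ^+ 2).
  by rewrite sqrtr_sqr ger0_norm // mulr_ge0 // ltW.
rewrite ler_sqrt; last by rewrite mulrn_wge0 // mulr_ge0 ?pi_ge0.
have := @pi_ge2 R; rewrite mulr2n; nra.
Qed.

Lemma normal_prob_itv_le (a b : R) : a <= b ->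
  (normal_prob 0 sigma `[a, b] <= ((b - a) / (2 * sigma))%:E)%E.
Proof.
move=> le_ab; rewrite /normal_prob.
apply: (@le_trans _ _ (\int[lebesgue_measure]_(x in `[a, b]) (normal_peak sigma)%:E)%E).
  apply: ge0_le_integral => //.
  - by move=> x _; rewrite lee_fin normal_pdf_ge0.
  - apply/measurable_realfun.measurable_EFinP.
    exact: measurable_funS (measurable_normal_pdf 0 sigma).
  - by move=> x _; rewrite lee_fin normal_pdf_ub // gt_eqF.
rewrite integral_cst //= lebesgue_measure_itv /= lte_fin.
have [lt_ab | _] := ltP a b.
  rewrite -EFinD -EFinM lee_fin mulrC ler_wpM2l ?subr_ge0 //; exact: normal_peak_le.
by rewrite mule0 lee_fin divr_ge0 ?subr_ge0 // mulr_ge0 // ltW.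
Qed.

End normal_prob_bound.

Lemma prob_le_of_disjoint_cover d (T : measurableType d) (R : realType)
    (P : probability T R) (Idx : countType) (A : set T) (B S : Idx -> set T) (K : R) :
  measurable A -> (forall i, measurable (B i)) -> (forall i, measurable (S i)) ->
  trivIset setT S -> 0 <= K -> (forall i, (P (B i) <= K%:E * P (S i))%E) ->
  A `<=` \bigcup_i B i -> (P A <= K%:E)%E.
Proof.
move=> mA mB mS triv_S K_ge0 le_BS sub_AB.
pose seq_of (F : Idx -> set T) k := if pickle_inv k is Some i then F i else set0.
have m_seq F : (forall i, measurable (F i)) -> forall k, measurable (seq_of F k).
  by move=> mF k; rewrite /seq_of; case: pickle_inv.
have sub_A : A `<=` \bigcup_k seq_of B k.
  move=> w /sub_AB [i _ Bw]; exists (pickle i) => //; by rewrite /seq_of pickleK_inv.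
have triv_seq : trivIset setT (seq_of S).
  move=> k l _ _; rewrite /seq_of.
  case ek: (pickle_inv k) => [i|]; last by case=> w [].
  case el: (pickle_inv l) => [j|]; last by case=> w [].
  move=> /(triv_S i j I I) eq_ij.
  by rewrite -(@pickle_invK Idx k) -(@pickle_invK Idx l) ek el eq_ij.
apply: le_trans (measure_sigma_subadditive P (m_seq _ mB) mA sub_A) _.
apply: (@le_trans _ _ (\sum_(0 <= k <oo) (K%:E * P (seq_of S k)))%E).
  apply: lee_nneseries => [k _ _|k _]; first exact: measure_ge0.
  rewrite /seq_of; case: pickle_inv => [i|]; [exact: le_BS | by rewrite !measure0 mule0].
rewrite nneseriesZl; last by move=> k _; exact: measure_ge0.
rewrite -measure_semi_bigcup //; [|exact: m_seq|exact: bigcupT_measurable (m_seq _ mS)].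
rewrite -[X in (_ <= X)%E]mule1 lee_wpmul2l ?lee_fin //.
exact/probability_le1/bigcupT_measurable/m_seq.
Qed.

Lemma big_pair_row (V : Type) (idx : V) (op : Monoid.com_law idx)
    (I J : finType) (F : I * J -> V) (i0 : I) :
  \big[op/idx]_(ij : I * J) F ij =
  op (\big[op/idx]_(j : J) F (i0, j)) (\big[op/idx]_(i | i != i0) \big[op/idx]_(j : J) F (i, j)).
Proof.
rewrite (eq_bigr (fun ij => F (ij.1, ij.2))) => [|[] //].
by rewrite -(pair_bigA _ (fun i j => F (i, j))) (bigD1 i0).
Qed.

Lemma lee_prod_seq (R : realType) (I : Type) (s : seq I) (f h : I -> \bar R) :
  (forall i, (0 <= f i)%E) -> (forall i, (f i <= h i)%E) ->
  (\prod_(i <- s) f i <= \prod_(i <- s) h i)%E.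
Proof.
move=> f_ge0 le_fh; elim: s => [|x s IHs]; first by rewrite !big_nil.
by rewrite !big_cons lee_pmul ?prode_ge0.
Qed.

Lemma floor_grid_cell (R : realType) (eta x : R) (z : int) : 0 < eta ->
  x \in `[z%:~R * eta, (z + 1)%:~R * eta[ -> Num.floor (x / eta) = z.
Proof.
move=> eta_gt0; rewrite in_itv /= => /andP[lo hi]; apply: floor_def.
by rewrite ler_pdivlMr // ltr_pdivrMr // lo hi.
Qed.

Lemma floor_grid_residual (R : realType) (eta x : R) : 0 < eta ->
  0 <= x - (Num.floor (x / eta))%:~R * eta < eta.
Proof.
move=> eta_gt0; have /andP[lo hi] := floor_itv (x / eta).
rewrite ler_pdivlMr // in lo; rewrite ltr_pdivrMr // intrD mulrDl mul1r in hi.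
apply/andP; split; lra.
Qed.

Lemma pivot_near_center (R : realType) (n : nat) (c m x y : 'I_n -> R) (i0 : 'I_n)
    (eta delta : R) :
  0 <= eta -> (forall i, i != i0 -> 0 <= x i - y i < eta) ->
  `|\sum_i c i * (m i + x i)| <= delta ->
  `|c i0 * x i0 + (\sum_(i | i != i0) c i * (m i + y i) + c i0 * m i0)| <=
    delta + (\sum_i `|c i|) * eta.
Proof.
move=> eta_ge0 near_xy small.
set err := \sum_(i | i != i0) c i * (x i - y i).
have splitE : \sum_i c i * (m i + x i) =
    c i0 * x i0 + (\sum_(i | i != i0) c i * (m i + y i) + c i0 * m i0) + err.
  rewrite (bigD1 i0) //=.
  have -> : \sum_(i | i != i0) c i * (m i + x i) =
      \sum_(i | i != i0) c i * (m i + y i) + err.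
    by rewrite /err -big_split /=; apply: eq_bigr => i _; ring.
  ring.
have err_le : `|err| <= (\sum_i `|c i|) * eta.
  apply: le_trans (ler_norm_sum _ _ _) _.
  rewrite big_distrl [X in _ <= X](bigD1 i0) //= -[X in X <= _]add0r.
  apply: lerD; first by rewrite mulr_ge0.
  apply: ler_sum => i ne_i; have /andP[lo hi] := near_xy i ne_i.
  by rewrite normrM ler_wpM2l // ger0_norm // ltW.
move: small; rewrite splitE => small.
by apply: le_trans (lerD small err_le); rewrite -[X in `|X|](addrK err) ler_normB.
Qed.

Lemma mem_centered_window (R : realType) (a C r y : R) : a != 0 -> `|a * y + C| <= r ->
  y \in `[- C / a - r / `|a|, - C / a + r / `|a|].
Proof.
move=> a_neq0 small; rewrite in_itv /= -ler_distlC.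
have -> : - C / a - y = - (a * y + C) / a by field.
by rewrite normrM normrN normfV ler_pdivlMr ?normr_gt0 // divfK ?normr_eq0.
Qed.

Section grid_cover.
Variables (R : realType) (n d : nat) (sigma : R) (mu : 'I_n -> 'I_d -> R)
  (dT : measure_display) (T : measurableType dT) (P : probability T R)
  (g : 'I_n * 'I_d -> T -> R).
Hypothesis sigma_gt0 : 0 < sigma.
Hypothesis indep : mutually_independent P g.
Hypothesis g_normal : forall ij A, measurable A -> P (g ij @^-1` A) = normal_prob 0 sigma A.

Definition noise_box (S : 'I_n * 'I_d -> set R) : set T :=
  \bigcap_(ij in [set: 'I_n * 'I_d]) (g ij @^-1` S ij).

Lemma measurable_noise_box S : (forall ij, measurable (S ij)) -> measurable (noise_box S).
Proof.
move=> mS; apply: fin_bigcap_measurable => [|ij _]; first exact: finite_finset.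
by rewrite -[_ @^-1` _]setTI; apply: indep.1.
Qed.

Variables (c : 'I_n -> R) (i0 : 'I_n) (delta eta : R).
Hypotheses (c_i0_neq0 : c i0 != 0) (delta_ge0 : 0 <= delta) (eta_gt0 : 0 < eta).

(* A grid point z fixes the eta-cell of every noise variable outside the pivot row i0;
   its box additionally confines row i0 to the windows that small combinations force,
   its slab leaves row i0 free. Setting z to 0 on row i0 makes the slabs disjoint. *)

Definition window_radius := delta + (\sum_i `|c i|) * eta.

Definition window_prob := window_radius / (`|c i0| * sigma).

Definition grid_cell (z : int) : set R := `[z%:~R * eta, (z + 1)%:~R * eta[.

Definition grid_center (z : {ffun 'I_n * 'I_d -> int}) (j : 'I_d) :=
  \sum_(i | i != i0) c i * (mu i j + (z (i, j))%:~R * eta) + c i0 * mu i0 j.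

Definition pivot_window z j : set R :=
  `[- grid_center z j / c i0 - window_radius / `|c i0|,
    - grid_center z j / c i0 + window_radius / `|c i0|].

Definition pivot_free (z : {ffun 'I_n * 'I_d -> int}) := [forall j, z (i0, j) == 0].

Definition box_side z (ij : 'I_n * 'I_d) :=
  if ij.1 == i0 then pivot_window z ij.2 else grid_cell (z ij).

Definition slab_side z (ij : 'I_n * 'I_d) := if ij.1 == i0 then setT else grid_cell (z ij).

Definition box z := if pivot_free z then noise_box (box_side z) else set0.

Definition slab z := if pivot_free z then noise_box (slab_side z) else set0.

Lemma window_radius_ge0 : 0 <= window_radius.
Proof. by rewrite addr_ge0 // mulr_ge0 ?sumr_ge0 // ltW. Qed.

Lemma window_prob_ge0 : 0 <= window_prob.
Proof. by rewrite divr_ge0 ?window_radius_ge0 // mulr_ge0 // ltW. Qed.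

Lemma measurable_box_side z ij : measurable (box_side z ij).
Proof. by rewrite /box_side; case: ifP => _; exact: measurable_itv. Qed.

Lemma measurable_slab_side z ij : measurable (slab_side z ij).
Proof. by rewrite /slab_side; case: ifP => _; [exact: measurableT | exact: measurable_itv]. Qed.

Lemma measurable_box z : measurable (box z).
Proof.
by rewrite /box; case: ifP => // _; apply: measurable_noise_box; exact: measurable_box_side.
Qed.

Lemma measurable_slab z : measurable (slab z).
Proof.
by rewrite /slab; case: ifP => // _; apply: measurable_noise_box; exact: measurable_slab_side.
Qed.

Lemma prob_pivot_window_le z j : (P (g (i0, j) @^-1` pivot_window z j) <= window_prob%:E)%E.
Proof.
have c_gt0 : 0 < `|c i0| by rewrite normr_gt0.
have r_ge0 : 0 <= window_radius / `|c i0| by rewrite divr_ge0 ?window_radius_ge0.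
rewrite g_normal; last exact: measurable_itv.
apply: le_trans (normal_prob_itv_le sigma_gt0 _) _; first lra.
rewrite lee_fin /window_prob le_eqVlt; apply/orP; left; apply/eqP.
by field; rewrite c_i0_neq0 !gt_eqF.
Qed.

Lemma prob_box_le z : (P (box z) <= (window_prob ^+ d)%:E * P (slab z))%E.
Proof.
rewrite /box /slab; case: ifP => _; last by rewrite measure0 mule0.
rewrite /noise_box (indep.2 _ (measurable_box_side z)) (indep.2 _ (measurable_slab_side z)).
rewrite !(big_pair_row _ _ i0) /=.
have -> : (\prod_(j < d) P (g (i0, j) @^-1` slab_side z (i0, j)) = 1)%E.
  by rewrite big1 // => j _; rewrite /slab_side eqxx preimage_setT probability_setT.
have -> : (\prod_(i | i != i0) \prod_(j < d) P (g (i, j) @^-1` box_side z (i, j)) =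
           \prod_(i | i != i0) \prod_(j < d) P (g (i, j) @^-1` slab_side z (i, j)))%E.
  by apply: eq_bigr => i /negbTE ne_i; apply: eq_bigr => j _; rewrite /box_side /slab_side ne_i.
rewrite mul1e lee_wpmul2r //; first by do 2 (apply: prode_ge0 => ? _).
rewrite -[d in X in (_ <= X)%E]card_ord -prodr_const -prodEFin.
apply: lee_prod_seq => j; first exact: measure_ge0.
by rewrite /box_side eqxx; exact: prob_pivot_window_le.
Qed.

Lemma trivIset_slab : trivIset setT slab.
Proof.
move=> z z' _ _ [w []]; rewrite /slab.
case: ifP => // free_z slab_z; case: ifP => // free_z' slab_z'.
apply/ffunP => -[i j]; have [-> | ne_i] := eqVneq i i0.
  by move/forallP: free_z => /(_ j)/eqP ->; move/forallP: free_z' => /(_ j)/eqP ->.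
have := slab_z (i, j) Logic.I; have := slab_z' (i, j) Logic.I.
rewrite /slab_side /= (negbTE ne_i) /grid_cell /=.
by move=> /(floor_grid_cell eta_gt0) <- /(floor_grid_cell eta_gt0) <-.
Qed.

Lemma sub_bigcup_box (A : set T) :
  A `<=` [set w | forall j, `|lincomb c (data_points mu g w) j| <= delta] ->
  A `<=` \bigcup_z box z.
Proof.
move=> sub_A w /sub_A small.
pose z := [ffun ij : 'I_n * 'I_d => if ij.1 == i0 then 0 else Num.floor (g ij w / eta)].
have free_z : pivot_free z by apply/forallP => j; rewrite ffunE eqxx.
have residual i j : i != i0 -> 0 <= g (i, j) w - (z (i, j))%:~R * eta < eta.
  by move=> /negbTE ne_i; rewrite ffunE /= ne_i floor_grid_residual.
exists z => //; rewrite /box free_z => -[i j] _ /=; rewrite /box_side /=.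
have [-> | ne_i] := eqVneq i i0.
  apply: mem_centered_window => //.
  apply: (pivot_near_center (m := mu^~ j) (x := fun i => g (i, j) w) (ltW eta_gt0) (residual^~ j)).
  exact: small j.
change (g (i, j) w \in `[(z (i, j))%:~R * eta, (z (i, j) + 1)%:~R * eta[).
rewrite in_itv /= intrD mulrDl mul1r.
by have /andP[lo hi] := residual i j ne_i; apply/andP; split; lra.
Qed.

Lemma prob_small_lincomb_le_window (A : set T) : measurable A ->
  A `<=` [set w | forall j, `|lincomb c (data_points mu g w) j| <= delta] ->
  (P A <= (window_prob ^+ d)%:E)%E.
Proof.
move=> mA sub_A; apply: (prob_le_of_disjoint_cover mA measurable_box measurable_slab).
- exact: trivIset_slab.
- by rewrite exprn_ge0 // window_prob_ge0.
- exact: prob_box_le.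
- exact: sub_bigcup_box.
Qed.

End grid_cover.

Lemma exprD_le_linear (R : realFieldType) (a b x : R) (d : nat) :
  0 <= a -> 0 <= b -> 0 <= x -> x <= 1 ->
  (a + b * x) ^+ d <= a ^+ d + x * (d%:R * (a + b) ^+ d).
Proof.
move=> a_ge0 b_ge0 x_ge0 x_le1; elim: d => [|d IHd].
  by rewrite !expr0 mul0r mulr0 addr0.
set A := a ^+ d in IHd *; set S := (a + b) ^+ d in IHd *.
set e := (d%:R : R) in IHd *.
have A_ge0 : 0 <= A by rewrite exprn_ge0.
have le_AS : A <= S by rewrite lerXn2r ?nnegrE ?addr_ge0 // lerDl.
have e_ge0 : 0 <= e by [].
rewrite !exprS -/A -/S -natr1 -/e.
apply: le_trans (ler_wpM2l _ IHd) _; first by rewrite addr_ge0 // mulr_ge0.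
have bA : b * A <= (a + b) * S by rewrite ler_pM // lerDr.
have xS : 0 <= x * (e * b * S) by rewrite !mulr_ge0 // (le_trans A_ge0).
have := ler_wpM2l x_ge0 bA; have := ler_wpM2l xS x_le1; lra.
Qed.

Lemma le_expr_limit (R : realFieldType) (p a b : R) (d : nat) : 0 <= a -> 0 <= b ->
  (forall eta, 0 < eta -> p <= (a + b * eta) ^+ d) -> p <= a ^+ d.
Proof.
move=> a_ge0 b_ge0 le_p; apply/ler_addgt0Pr => e e_gt0.
set M := d%:R * (a + b) ^+ d.
have M_ge0 : 0 <= M by rewrite mulr_ge0 // exprn_ge0 // addr_ge0.
pose eta := Num.min 1 (e / (M + 1)).
have eta_gt0 : 0 < eta by rewrite lt_min ltr01 divr_gt0 // ltr_wpDl.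
have eta_le1 : eta <= 1 by rewrite ge_min lexx.
have eta_M : eta * (M + 1) <= e.
  by rewrite -ler_pdivlMr ?ltr_wpDl // ge_min lexx orbT.
apply: le_trans (le_p eta eta_gt0) _.
apply: le_trans (exprD_le_linear d a_ge0 b_ge0 (ltW eta_gt0) eta_le1) _.
by rewrite lerD2l -/M; apply: le_trans eta_M; apply: ler_wpM2l; [exact: ltW | lra].
Qed.

Section anticoncentration.
Variables (R : realType) (n d : nat) (sigma : R) (mu : 'I_n -> 'I_d -> R)
  (dT : measure_display) (T : measurableType dT) (P : probability T R)
  (g : 'I_n * 'I_d -> T -> R).
Hypothesis sigma_gt0 : 0 < sigma.
Hypothesis indep : mutually_independent P g.
Hypothesis g_normal : forall ij A, measurable A -> P (g ij @^-1` A) = normal_prob 0 sigma A.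

Lemma prob_small_lincomb_le (c : 'I_n -> R) (i0 : 'I_n) (delta : R) (A : set T) :
  c i0 != 0 -> 0 <= delta -> measurable A ->
  A `<=` [set w | forall j, `|lincomb c (data_points mu g w) j| <= delta] ->
  (P A <= ((delta / (`|c i0| * sigma)) ^+ d)%:E)%E.
Proof.
move=> c_i0_neq0 delta_ge0 mA sub_A.
have PA_fin : P A \is a fin_num.
  by rewrite ge0_fin_numE ?measure_ge0 // (le_lt_trans (probability_le1 P mA)) ?ltry.
have scale_gt0 : 0 < `|c i0| * sigma by rewrite mulr_gt0 // normr_gt0.
rewrite -(fineK PA_fin) lee_fin.
apply: (@le_expr_limit _ _ _ ((\sum_i `|c i|) / (`|c i0| * sigma))).
- by rewrite divr_ge0 // ltW.
- by rewrite divr_ge0 ?sumr_ge0 // ltW.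
move=> eta eta_gt0.
have := prob_small_lincomb_le_window sigma_gt0 indep g_normal c_i0_neq0 delta_ge0 eta_gt0 mA sub_A.
rewrite -(fineK PA_fin) lee_fin /window_prob /window_radius => /le_trans; apply.
by rewrite mulrDl mulrAC.
Qed.

End anticoncentration.

(** * Union bound over quadruples of key-values *)

Lemma measure_fin_bigcup_le d (T : measurableType d) (R : realType)
    (mu : {measure set T -> \bar R}) (I : finType) (F : I -> set T) :
  (forall i, measurable (F i)) ->
  (mu (\bigcup_(i in [set: I]) F i) <= \sum_(i : I) mu (F i))%E.
Proof.
move=> mF.
pose G k := if @insub _ (fun k => k < #|I|)%N 'I_#|I| k is Some i then F (enum_val i) else set0.
have mG k : `I_#|I| k -> measurable (G k) by move=> _; rewrite /G; case: insub.
have cover : \bigcup_(i in [set: I]) F i `<=` \big[setU/set0]_(k < #|I|) G k.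
  move=> w [i _ Fw]; rewrite -bigcup_mkord; exists (enum_rank i) => /=; first exact: ltn_ord.
  by rewrite /G valK enum_rankK.
have mU : measurable (\bigcup_(i in [set: I]) F i).
  by apply: fin_bigcup_measurable => //; exact: finite_finset.
apply: le_trans (@content_subadditive _ _ _ mu _ _ _ mG mU cover) _.
rewrite (big_enum_val (fun i => mu (F i))) /=.
by apply: lee_sum => k _; rewrite /G valK.
Qed.

Lemma eucl_norm_ge_coord (R : realType) (d : nat) (v : 'I_d -> R) (j : 'I_d) :
  `|v j| <= eucl_norm v.
Proof.
rewrite -sqrtr_sqr ler_sqrt; last by apply: sumr_ge0 => k _; exact: sqr_ge0.
by rewrite (bigD1 j) //= lerDl sumr_ge0 // => k _; exact: sqr_ge0.
Qed.

Section sparsity.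
Variables (R : realType) (n d sqrtk : nat) (sigma delta : R) (mu : 'I_n -> 'I_d -> R)
  (dT : measure_display) (T : measurableType dT) (P : probability T R)
  (g : 'I_n * 'I_d -> T -> R).
Hypothesis sigma_gt0 : 0 < sigma.
Hypothesis delta_ge0 : 0 <= delta.
Hypothesis indep : mutually_independent P g.
Hypothesis g_normal : forall ij A, measurable A -> P (g ij @^-1` A) = normal_prob 0 sigma A.

Local Notation max_size := (4 * d * sqrtk)%N.

Definition kv_coef_of (x : kv_code n) : 'I_n -> R := kv_coef x.1.1 x.1.2 x.2.

Lemma keyvalue_code (c : 'I_n -> R) : is_keyvalue d sqrtk c ->
  exists2 x : kv_code n, kv_code_valid max_size x & c = kv_coef_of x.
Proof.
move=> [s [t [S [le_s /andP[t_gt0 lt_tn] size_S ->]]]].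
have lt_s : (s < (n ^ 2).+1)%N by rewrite ltnS.
by exists (Ordinal lt_s, Ordinal lt_tn, S) => //; rewrite /kv_code_valid /= t_gt0.
Qed.

Lemma is_keyvalue_coef (x : kv_code n) :
  kv_code_valid max_size x -> is_keyvalue d sqrtk (kv_coef_of x).
Proof.
move=> /andP[t_gt0 size_S]; exists x.1.1, x.1.2, x.2; split => //.
- by rewrite -ltnS ltn_ord.
- by rewrite t_gt0 ltn_ord.
Qed.

Definition k1 : 'I_4 := @Ordinal 4 0 isT.
Definition k2 : 'I_4 := @Ordinal 4 1 isT.
Definition k3 : 'I_4 := @Ordinal 4 2 isT.
Definition k4 : 'I_4 := @Ordinal 4 3 isT.

Definition quad_coef (q : {ffun 'I_4 -> kv_code n}) : 'I_n -> R :=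
  fun i => kv_coef_of (q k1) i + kv_coef_of (q k2) i - kv_coef_of (q k3) i - kv_coef_of (q k4) i.

Definition quad_bad (q : {ffun 'I_4 -> kv_code n}) :=
  [forall a, kv_code_valid max_size (q a)] && [exists i, quad_coef q i != 0].

Definition small_event (c : 'I_n -> R) : set T :=
  [set w | eucl_norm (lincomb c (data_points mu g w)) <= delta].

Definition bad_event q := if quad_bad q then small_event (quad_coef q) else set0.

Lemma not_sparse_eq :
  [set w | ~ delta_sparse sqrtk delta (data_points mu g w)] = \bigcup_(q in setT) bad_event q.
Proof.
apply/seteqP; split => w /=; last first.
  case=> q _; rewrite /bad_event; case: ifP => // /andP[/forallP valid_q /existsP[i neq0]] small.
  have kv a := is_keyvalue_coef (valid_q a).
  move=> /(_ _ _ _ _ (kv k1) (kv k2) (kv k3) (kv k4) small) /(congr1 (fun f => f i)) /= /eqP.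
  by rewrite -subr_eq0 opprD addrA; apply/negP.
move=> not_sparse; apply: contrapT => no_bad; apply: not_sparse.
move=> c1 c2 c3 c4 /keyvalue_code[x1 v1 ->] /keyvalue_code[x2 v2 ->].
move=> /keyvalue_code[x3 v3 ->] /keyvalue_code[x4 v4 ->] small.
pose q := [ffun a : 'I_4 => nth x1 [:: x1; x2; x3; x4] a].
have coef_q i :
    quad_coef q i = kv_coef_of x1 i + kv_coef_of x2 i - kv_coef_of x3 i - kv_coef_of x4 i.
  by rewrite /quad_coef !ffunE.
apply/funext => i; apply/eqP; rewrite -subr_eq0 opprD addrA -coef_q.
apply: contrapT => /negP neq0; apply: no_bad; exists q => //.
rewrite /bad_event /quad_bad; case: ifPn => [_ | /negP[]].
  by rewrite /small_event /= (funext coef_q).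
apply/andP; split; last by apply/existsP; exists i.
by apply/forallP => -[[|[|[|[|a]]]] lt_a4] //=; rewrite ffunE.
Qed.

Lemma measurable_small_event c : measurable (small_event c).
Proof.
pose f w := \sum_(j < d) (\sum_i c i * (mu i j + g (i, j) w)) ^+ 2.
have mf : measurable_fun setT f.
  apply: measurable_sum => j; apply: measurable_realfun.measurable_funX.
  apply: measurable_sum => i; apply: measurable_realfun.measurable_funM => //.
  by apply: measurable_realfun.measurable_funD => //; exact: indep.1.
have -> : small_event c = f @^-1` `]-oo, delta ^+ 2].
  have delta_sqrt : delta = Num.sqrt (delta ^+ 2) by rewrite sqrtr_sqr ger0_norm.
  apply/seteqP; split => w; rewrite /small_event /eucl_norm /lincomb /data_points /f /= in_itv /=.
    by rewrite {1}delta_sqrt ler_sqrt // sqr_ge0.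
  by rewrite {2}delta_sqrt ler_sqrt // sqr_ge0.
by have := mf measurableT _ (measurable_itv `]-oo, delta ^+ 2]); rewrite setTI.
Qed.

Lemma kv_coef_ofE (x : kv_code n) i :
  kv_coef_of x i = ((i \in x.2) * x.1.1)%N%:R / (x.1.2 * #|x.2|)%N%:R.
Proof. by rewrite /kv_coef_of /kv_coef; case: (i \in x.2); rewrite ?mul1n ?mul0n ?mul0r ?natrM. Qed.

Lemma prod_ord4 (V : comPzSemiRingType) (F : 'I_4 -> V) :
  \prod_(a < 4) F a = F k1 * F k2 * F k3 * F k4.
Proof.
rewrite !big_ord_recl big_ord0 mulr1 !mulrA.
by congr (_ * _ * _ * _); congr F; exact: val_inj.
Qed.

Lemma quad_coef_norm_ge (q : {ffun 'I_4 -> kv_code n}) (i : 'I_n) :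
  [forall a, kv_code_valid max_size (q a)] -> quad_coef q i != 0 ->
  (\prod_(a < 4) ((q a).1.2 * #|(q a).2|)%N%:R)^-1 <= `|quad_coef q i|.
Proof.
move=> /forallP valid_q neq0.
have D_gt0 a : (0 < (q a).1.2 * #|(q a).2|)%N.
  by have /andP[t_gt0 /andP[S_gt0 _]] := valid_q a; rewrite muln_gt0 t_gt0.
rewrite prod_ord4 -!natrM.
by apply: frac4_norm_ge neq0; rewrite ?D_gt0 // /quad_coef !kv_coef_ofE.
Qed.

Lemma measurable_bad_event q : measurable (bad_event q).
Proof. by rewrite /bad_event; case: ifP => // _; exact: measurable_small_event. Qed.

Lemma prob_bad_event_le q :
  (P (bad_event q) <= ((delta / sigma) ^+ d * \prod_(a < 4) (kv_weight d max_size (q a))%:R)%:E)%E.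
Proof.
have ratio_ge0 : 0 <= delta / sigma by rewrite divr_ge0 // ltW.
rewrite /bad_event; case: ifPn => [/andP[valid_q /existsP[i neq0]] | _]; last first.
  by rewrite measure0 lee_fin mulr_ge0 ?exprn_ge0 // prodr_ge0.
apply: le_trans (prob_small_lincomb_le sigma_gt0 indep g_normal neq0 delta_ge0
  (measurable_small_event _) _) _.
  by move=> w small j; apply: le_trans (eucl_norm_ge_coord _ j) small.
set D : R := \prod_(a < 4) ((q a).1.2 * #|(q a).2|)%N%:R.
have weightE a : ((kv_weight d max_size (q a))%:R : R) = ((q a).1.2 * #|(q a).2|)%N%:R ^+ d.
  by move/forallP: valid_q => /(_ a) valid; rewrite /kv_weight valid natrX.
have c_gt0 : 0 < `|quad_coef q i| by rewrite normr_gt0.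
have D_gt0 : 0 < D.
  apply: prodr_gt0 => a _; have /andP[t_gt0 /andP[S_gt0 _]] := forallP valid_q a.
  by rewrite ltr0n muln_gt0 t_gt0.
have inv_c_le : `|quad_coef q i|^-1 <= D.
  by rewrite -[D]invrK lef_pV2 ?posrE ?invr_gt0 // quad_coef_norm_ge.
rewrite lee_fin (eq_bigr _ (fun a _ => weightE a)) prodrXl -exprMn.
have -> : delta / (`|quad_coef q i| * sigma) = delta / sigma * `|quad_coef q i|^-1.
  by field; rewrite !gt_eqF.
rewrite lerXn2r ?nnegrE ?ler_wpM2l // mulr_ge0 // ?invr_ge0 ?ltW //.
Qed.

Lemma prob_not_sparse_le : (0 < d)%N -> (0 < sqrtk)%N ->
  (P [set w | ~ delta_sparse sqrtk delta (data_points mu g w)] <=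
    ((delta / sigma) ^+ d * (n ^ (max_size + 3 + d))%N%:R ^+ 4)%:E)%E.
Proof.
move=> d_gt0 sqrtk_gt0.
have sum_le : (\sum_(q : {ffun 'I_4 -> kv_code n}) P (bad_event q) <=
    \sum_(q : {ffun 'I_4 -> kv_code n})
      ((delta / sigma) ^+ d * \prod_(a < 4) (kv_weight d max_size (q a))%:R)%:E)%E.
  by apply: lee_sum => q _; exact: prob_bad_event_le.
rewrite not_sparse_eq.
apply: le_trans (le_trans (measure_fin_bigcup_le P measurable_bad_event) sum_le) _.
rewrite sumEFin lee_fin -big_distrr /=.
apply: ler_wpM2l; first by rewrite exprn_ge0 // divr_ge0 // ltW.
rewrite -(bigA_distr_bigA (fun (a : 'I_4) (x : kv_code n) => (kv_weight d max_size x)%:R : R)) /=.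
rewrite prodr_const card_ord lerXn2r ?nnegrE ?sumr_ge0 // -natr_sum ler_nat.
by apply: sum_kv_weight_leq => //; rewrite leq_pmulr.
Qed.

End sparsity.

Unset Implicit Arguments.

Theorem lemma11 (R : realType) (n k d sqrtk : nat) (sigma delta : R)
  (mu : 'I_n -> 'I_d -> R)
  (dT : measure_display) (T : measurableType dT) (P : probability T R)
  (g : 'I_n * 'I_d -> T -> R) :
  (0 < k)%N -> (k <= n)%N -> (0 < d)%N -> (d <= n)%N -> k = (sqrtk ^ 2)%N ->
  0 < sigma -> 0 <= delta ->
  (forall i j, 0 <= mu i j <= 1) ->
  mutually_independent P g ->
  (forall ij A, measurable A -> P (g ij @^-1` A) = normal_prob 0 sigma A) ->
  (P [set w | ~ delta_sparse sqrtk delta (data_points mu g w)] <=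
    ((n%:R) ^+ (16 * d * sqrtk + 12) * ((n%:R) ^+ 4 * delta / sigma) ^+ d)%:E)%E.
Proof.
move=> k_gt0 _ d_gt0 _ k_sq sigma_gt0 delta_ge0 _ indep g_normal.
have sqrtk_gt0 : (0 < sqrtk)%N by move: k_gt0; rewrite k_sq expn_gt0 orbF.
apply: le_trans (prob_not_sparse_le mu sigma_gt0 delta_ge0 indep g_normal d_gt0 sqrtk_gt0) _.
rewrite lee_fin natrX -exprM le_eqVlt; apply/orP; left; apply/eqP.
have -> : ((4 * d * sqrtk + 3 + d) * 4 = (16 * d * sqrtk + 12) + 4 * d)%N by lia.
rewrite exprD mulrCA; congr (_ * _).
by rewrite -mulrA [RHS]exprMn -exprM mulrC.
Qed.
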